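(* Let $p$ be an odd prime and let $R$ be a nearring with identity whose additive group is $G_1=\langle a\rangle+\langle b\rangle+\langle c\rangle$ with $ap=bp=cp=0$, $a+b=b+a+c$, $a+c=c+a$, $b+c=c+b$, and suppose $a$ is the identity element of $R$. Write every element as $x=ax_1+bx_2+cx_3$ ($0\le x_i<p$), and define maps $\alpha,\beta,\gamma\colon R\to\mathbb Z_p$ by $xb=a\alpha(x)+b\beta(x)+c\gamma(x)$. Then for $x=ax_1+bx_2+cx_3$, $y=ay_1+by_2+cy_3\in R$, $$xy=a(x_1y_1+\alpha(x)y_2)+b(x_2y_1+\beta(x)y_2)+c\Big(-x_1x_2\tbinom{y_1}{2}-\alpha(x)\beta(x)\tbinom{y_2}{2}-x_2\alpha(x)y_1y_2+x_3y_1+\gamma(x)y_2+x_1\beta(x)y_3-x_2\alpha(x)y_3\Big).$$ Moreover: (0) $\alpha(0)\equiv\beta(0)\equiv\gamma(0)\equiv 0\pmod p$ if and only if $R$ is zero-symmetric; (1) $\alpha(xy)\equiv x_1\alpha(y)+\alpha(x)\beta(y)\pmod p$; (2) $\beta(xy)\equiv x_2\alpha(y)+\beta(x)\beta(y)\pmod p$; (3) $\gamma(xy)\equiv -x_1x_2\binom{\alpha(y)}{2}-\alpha(x)\beta(x)\binom{\beta(y)}{2}-x_2\alpha(x)\alpha(y)\beta(y)+x_3\alpha(y)+\gamma(x)\beta(y)+x_1\beta(x)\gamma(y)-x_2\alpha(x)\gamma(y)\pmod p$.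
   Context: A (left) nearring is a set $R$ with operations $+,\cdot$ such that $(R,+)$ is a group with neutral element $0$, $(R,\cdot)$ is a semigroup, and $x(y+z)=xy+xz$ for all $x,y,z$; it has an identity if $(R,\cdot)$ is a monoid. It is zero-symmetric if $0\cdot x=0$ for all $x\in R$. The group is written additively; $gk$ denotes $g$ added to itself $k$ times. Coefficients are read modulo $p$. *)

From mathcomp Require Import all_boot all_order all_algebra.
Set Implicit Arguments. Unset Strict Implicit. Unset Printing Implicit Defensive.
Import GRing.Theory Num.Theory.

Record nearring := NearRing {
  nr_car :> Type;
  nr_add : nr_car -> nr_car -> nr_car;
  nr_zero : nr_car;
  nr_opp : nr_car -> nr_car;
  nr_mul : nr_car -> nr_car -> nr_car;
  nr_addA : forall x y z, nr_add x (nr_add y z) = nr_add (nr_add x y) z;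
  nr_add0r : forall x, nr_add nr_zero x = x;
  nr_addr0 : forall x, nr_add x nr_zero = x;
  nr_addNr : forall x, nr_add (nr_opp x) x = nr_zero;
  nr_addrN : forall x, nr_add x (nr_opp x) = nr_zero;
  nr_mulA : forall x y z, nr_mul x (nr_mul y z) = nr_mul (nr_mul x y) z;
  nr_mulDr : forall x y z, nr_mul x (nr_add y z) = nr_add (nr_mul x y) (nr_mul x z)
}.

Section Mult.
Variable R : nearring.

Fixpoint nmul (g : R) (k : nat) : R :=
  match k with O => nr_zero R | S k' => nr_add (nmul g k') g end.

Definition zmul (g : R) (k : int) : R :=
  match k with Posz n => nmul g n | Negz n => nr_opp (nmul g n.+1) end.

Definition comb3 (a b c : R) (k1 k2 k3 : int) : R :=
  nr_add (nr_add (zmul a k1) (zmul b k2)) (zmul c k3).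

Definition zero_symmetric : Prop := forall x : R, nr_mul (nr_zero R) x = nr_zero R.
End Mult.

(* The additive group is the Heisenberg group mod p: in the coordinates of
   [comb3 a b c], addition reads
     (K1, K2, K3) + (L1, L2, L3) = (K1 + L1, K2 + L2, K3 + L3 - K2 L1),
   so n-fold multiples pick up the term -K1 K2 C(n, 2).  Since x a = x,
   left distributivity applied to a + b = (b + a) + c shows that x c is the
   commutator -(x b + x) + (x + x b); hence x y = x y1 + (x b) y2 + (x c) y3
   depends only on the coordinates of x and of x b.  Associativity
   (x y) b = x (y b) then gives the recursions for alpha, beta and gamma,
   and 0 y is determined by 0 b. *)

From mathcomp Require Import all_boot all_order all_algebra.
From mathcomp Require Import ring.
Import GRing.Theory Num.Theory.

Set Implicit Arguments.
Unset Strict Implicit.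
Unset Printing Implicit Defensive.
Local Open Scope ring_scope.

Local Infix "⊕" := nr_add (at level 50, left associativity).
Local Infix "⊗" := nr_mul (at level 40, left associativity).
Local Notation "0g" := (nr_zero _).

Section NearringArith.
Variable R : nearring.
Implicit Types x y z g h : R.

Lemma nr_addKr x y : nr_opp x ⊕ (x ⊕ y) = y.
Proof. by rewrite nr_addA nr_addNr nr_add0r. Qed.

Lemma nr_addrK x y : x ⊕ y ⊕ nr_opp y = x.
Proof. by rewrite -nr_addA nr_addrN nr_addr0. Qed.

Lemma nr_addrI x y z : x ⊕ y = x ⊕ z -> y = z.
Proof. by move=> e; rewrite -(nr_addKr x y) e nr_addKr. Qed.

Lemma nr_addr_eq0 x y : x ⊕ y = 0g -> y = nr_opp x.
Proof. by move=> e; rewrite -(nr_addKr x y) e nr_addr0. Qed.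

Lemma nr_addrAC x y z : y ⊕ z = z ⊕ y -> x ⊕ y ⊕ z = x ⊕ z ⊕ y.
Proof. by move=> e; rewrite -!nr_addA e. Qed.

Lemma nmulD g m n : nmul g (m + n)%N = nmul g m ⊕ nmul g n.
Proof.
elim: n => [|n IHn]; first by rewrite addn0 nr_addr0.
by rewrite addnS /= IHn nr_addA.
Qed.

Lemma nmul_commute g h n : g ⊕ h = h ⊕ g -> nmul g n ⊕ h = h ⊕ nmul g n.
Proof.
move=> gh; elim: n => [|n IHn] /=; first by rewrite nr_add0r nr_addr0.
by rewrite -nr_addA gh nr_addA IHn -nr_addA.
Qed.

Lemma opp_commute g h : g ⊕ h = h ⊕ g -> nr_opp g ⊕ h = h ⊕ nr_opp g.
Proof.
move=> gh; rewrite -{1}[h](nr_addrK h g) -gh !nr_addA.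
by rewrite nr_addNr nr_add0r.
Qed.

Lemma zmul_nat g n : zmul g n%:Z = nmul g n.
Proof. by []. Qed.

Lemma zmul_commute g h k : g ⊕ h = h ⊕ g -> zmul g k ⊕ h = h ⊕ zmul g k.
Proof.
by case: k => n gh; [|apply: opp_commute]; apply: nmul_commute.
Qed.

Lemma nr_mulr0 x : x ⊗ 0g = 0g.
Proof. by apply: (@nr_addrI (x ⊗ 0g)); rewrite -nr_mulDr !nr_addr0. Qed.

Lemma nr_mulrN x y : x ⊗ nr_opp y = nr_opp (x ⊗ y).
Proof. by apply: nr_addr_eq0; rewrite -nr_mulDr nr_addrN nr_mulr0. Qed.

Lemma nr_mulrnAr x g n : x ⊗ nmul g n = nmul (x ⊗ g) n.
Proof. by elim: n => [|n IHn] /=; rewrite ?nr_mulr0 // nr_mulDr IHn. Qed.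

Lemma nr_mulrzAr x g k : x ⊗ zmul g k = zmul (x ⊗ g) k.
Proof. by case: k => n; rewrite /zmul ?nr_mulrN nr_mulrnAr. Qed.

End NearringArith.

Lemma abs_modz (p : nat) (k : int) :
  (0 < p)%N -> (`|(k %% p)%Z|%N : int) = (k %% p)%Z.
Proof. by move=> p_gt0; rewrite gez0_abs // modz_ge0 // eqz_nat -lt0n. Qed.

Lemma abs_modz_lt (p : nat) (k : int) : (0 < p)%N -> (`|(k %% p)%Z| < p)%N.
Proof. by move=> p_gt0; rewrite -ltz_nat abs_modz // ltz_pmod // ltz_nat. Qed.

Section Exponent.
Variables (R : nearring) (p : nat) (g : R).
Hypotheses (p_gt0 : (0 < p)%N) (gp : nmul g p = 0g).

Lemma nmul_modn m : nmul g m = nmul g (m %% p).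
Proof.
have nmul_mulp q : nmul g (q * p) = 0g.
  by elim: q => [|q IHq] //; rewrite mulSn nmulD gp nr_add0r.
by rewrite {1}(divn_eq m p) nmulD nmul_mulp nr_add0r.
Qed.

Lemma eq_nmul_modz (m n : nat) : (m = n %[mod p])%Z -> nmul g m = nmul g n.
Proof. by rewrite !modz_nat => -[e]; rewrite nmul_modn e -nmul_modn. Qed.

Lemma zmul_modz k : zmul g k = nmul g `|(k %% p)%Z|%N.
Proof.
case: k => n; rewrite /zmul; first by rewrite modz_nat absz_nat -nmul_modn.
symmetry; apply: nr_addr_eq0; rewrite -nmulD (@eq_nmul_modz _ 0) //.
by rewrite PoszD abs_modz // modzDmr NegzE subrr.
Qed.

Lemma eq_zmul_modz k l : (k = l %[mod p])%Z -> zmul g k = zmul g l.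
Proof. by rewrite !zmul_modz => ->. Qed.

Lemma zmulD k l : zmul g (k + l) = zmul g k ⊕ zmul g l.
Proof.
rewrite !zmul_modz -nmulD; apply: eq_nmul_modz.
by rewrite PoszD !abs_modz // modz_mod modzDml modzDmr.
Qed.

Lemma zmulN k : zmul g (- k) = nr_opp (zmul g k).
Proof. by apply: nr_addr_eq0; rewrite -zmulD addrN. Qed.

Lemma zmulC k l : zmul g k ⊕ zmul g l = zmul g l ⊕ zmul g k.
Proof. by rewrite -!zmulD addrC. Qed.

End Exponent.

Section Commutator.
Variables (R : nearring) (g h k : R).
Hypotheses (kg : k ⊕ g = g ⊕ k) (kh : k ⊕ h = h ⊕ k) (hg : h ⊕ g = g ⊕ h ⊕ k).

Lemma nmul_commutator_l m : nmul g m ⊕ h ⊕ nmul k m = h ⊕ nmul g m.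
Proof.
have kmh n : nmul k n ⊕ h = h ⊕ nmul k n by apply: nmul_commute.
have kmg n : nmul k n ⊕ g = g ⊕ nmul k n by apply: nmul_commute.
elim: m => [|m IHm]; first by rewrite /= nr_add0r !nr_addr0.
rewrite /= nr_addA (nr_addrAC _ (esym (kmh m))) (nr_addrAC _ (esym (kmg m))).
rewrite -(nr_addA _ g h) -(nr_addA _ (g ⊕ h) k) -hg nr_addA.
by rewrite (nr_addrAC _ (kmh m)) IHm nr_addA.
Qed.

Lemma nmul_commutator m n :
  nmul g m ⊕ nmul h n ⊕ nmul k (m * n) = nmul h n ⊕ nmul g m.
Proof.
have kmn i j : nmul k i ⊕ nmul k j = nmul k j ⊕ nmul k i.
  by apply: nmul_commute; symmetry; apply: nmul_commute.
have kmh i : nmul k i ⊕ h = h ⊕ nmul k i by apply: nmul_commute.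
elim: n => [|n IHn]; first by rewrite muln0 /= !nr_addr0 nr_add0r.
rewrite /= mulnS nmulD !nr_addA (nr_addrAC _ (kmn _ _)).
rewrite (nr_addrAC _ (esym (kmh _))) IHn -!nr_addA (nr_addA (nmul g m)).
by rewrite nmul_commutator_l.
Qed.

End Commutator.

Section NormalForm.
Variables (R : nearring) (p : nat) (a b c : R).
Hypothesis p_gt0 : (0 < p)%N.
Hypotheses (ha : nmul a p = 0g) (hb : nmul b p = 0g) (hc : nmul c p = 0g).
Hypotheses (hab : a ⊕ b = b ⊕ a ⊕ c) (hac : a ⊕ c = c ⊕ a) (hbc : b ⊕ c = c ⊕ b).

Local Notation comb := (comb3 a b c).

Lemma zmul_commutator m n :
  zmul b m ⊕ zmul a n = zmul a n ⊕ zmul b m ⊕ zmul c (- (m * n)).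
Proof.
rewrite (zmulN p_gt0 hc) (zmul_modz p_gt0 hb m) (zmul_modz p_gt0 ha n).
rewrite (@eq_zmul_modz _ _ _ p_gt0 hc _ (`|(m %% p)%Z| * `|(n %% p)%Z|)%N).
  by rewrite -(nmul_commutator (esym hbc) (esym hac) hab) nr_addrK.
by rewrite PoszM !abs_modz // modzMml modzMmr.
Qed.

Lemma comb3D K1 K2 K3 L1 L2 L3 :
  comb K1 K2 K3 ⊕ comb L1 L2 L3 = comb (K1 + L1) (K2 + L2) (K3 + L3 - K2 * L1).
Proof.
have ca k n : zmul c k ⊕ zmul a n = zmul a n ⊕ zmul c k.
  by apply: zmul_commute; symmetry; apply: zmul_commute.
have cb k n : zmul c k ⊕ zmul b n = zmul b n ⊕ zmul c k.
  by apply: zmul_commute; symmetry; apply: zmul_commute.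
rewrite /comb3 (zmulD p_gt0 ha) (zmulD p_gt0 hb) !(zmulD p_gt0 hc) !nr_addA.
rewrite (nr_addrAC _ (ca K3 L1)) (nr_addrAC _ (cb K3 L2)).
rewrite -(nr_addA (zmul a K1) (zmul b K2)) zmul_commutator !nr_addA.
by rewrite (nr_addrAC _ (cb _ L2)) (nr_addrAC _ (zmulC p_gt0 hc _ K3))
  (nr_addrAC _ (zmulC p_gt0 hc _ L3)).
Qed.

Lemma comb30 : comb 0 0 0 = 0g.
Proof. by rewrite /comb3 /= !nr_add0r. Qed.

Lemma comb3N K1 K2 K3 :
  nr_opp (comb K1 K2 K3) = comb (- K1) (- K2) (- K3 - K1 * K2).
Proof.
symmetry; apply: nr_addr_eq0; rewrite comb3D -comb30.
by congr comb3; ring.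
Qed.

Lemma nmul_comb3 K1 K2 K3 n :
  nmul (comb K1 K2 K3) n =
  comb (n%:Z * K1) (n%:Z * K2) (n%:Z * K3 - K1 * K2 * 'C(n, 2)%:Z).
Proof.
elim: n => [|n IHn]; first by rewrite /= -comb30 bin_small //; congr comb3; ring.
by rewrite /= IHn comb3D binS bin1 PoszD intS; congr comb3; ring.
Qed.

Lemma comb3_modz K1 K2 K3 :
  comb K1 K2 K3 = comb `|(K1 %% p)%Z|%N `|(K2 %% p)%Z|%N `|(K3 %% p)%Z|%N.
Proof.
rewrite !abs_modz // /comb3.
by rewrite -(eq_zmul_modz p_gt0 ha (modz_mod K1 p))
  -(eq_zmul_modz p_gt0 hb (modz_mod K2 p)) -(eq_zmul_modz p_gt0 hc (modz_mod K3 p)).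
Qed.


Hypothesis comb3_uniq : forall x1 x2 x3 y1 y2 y3 : nat,
  (x1 < p)%N -> (x2 < p)%N -> (x3 < p)%N ->
  (y1 < p)%N -> (y2 < p)%N -> (y3 < p)%N ->
  comb x1 x2 x3 = comb y1 y2 y3 -> [/\ x1 = y1, x2 = y2 & x3 = y3].

Lemma eq_comb3_modz K1 K2 K3 L1 L2 L3 : comb K1 K2 K3 = comb L1 L2 L3 ->
  [/\ (K1 = L1 %[mod p])%Z, (K2 = L2 %[mod p])%Z & (K3 = L3 %[mod p])%Z].
Proof.
rewrite comb3_modz [RHS]comb3_modz => /comb3_uniq.
have lt_p k : (`|(k %% p)%Z| < p)%N by exact: abs_modz_lt.
case=> // e1 e2 e3; split.
- by rewrite -(abs_modz K1 p_gt0) -(abs_modz L1 p_gt0) e1.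
- by rewrite -(abs_modz K2 p_gt0) -(abs_modz L2 p_gt0) e2.
- by rewrite -(abs_modz K3 p_gt0) -(abs_modz L3 p_gt0) e3.
Qed.

Hypothesis mulr_a : forall x : R, x ⊗ a = x.

Lemma mulr_c x X1 X2 X3 B1 B2 B3 :
  x = comb X1 X2 X3 -> x ⊗ b = comb B1 B2 B3 ->
  x ⊗ c = comb 0 0 (X1 * B2 - X2 * B1).
Proof.
move=> hx hxb.
have e1 : x ⊗ (a ⊕ b) = x ⊕ x ⊗ b by rewrite nr_mulDr mulr_a.
have e2 : x ⊗ (a ⊕ b) = x ⊗ b ⊕ x ⊕ x ⊗ c by rewrite hab !nr_mulDr mulr_a.
have -> : x ⊗ c = nr_opp (x ⊗ b ⊕ x) ⊕ (x ⊕ x ⊗ b) by rewrite -e1 e2 nr_addKr.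
by rewrite hxb hx !comb3D comb3N comb3D; congr comb3; ring.
Qed.

Lemma mulr_comb3 x y X1 X2 X3 B1 B2 B3 (y1 y2 y3 : nat) :
  x = comb X1 X2 X3 -> x ⊗ b = comb B1 B2 B3 -> y = comb y1 y2 y3 ->
  x ⊗ y = comb (X1 * y1%:Z + B1 * y2%:Z) (X2 * y1%:Z + B2 * y2%:Z)
     (- (X1 * X2 * 'C(y1, 2)%:Z) - B1 * B2 * 'C(y2, 2)%:Z
      - X2 * B1 * y1%:Z * y2%:Z + X3 * y1%:Z + B3 * y2%:Z
      + X1 * B2 * y3%:Z - X2 * B1 * y3%:Z).
Proof.
move=> hx hxb ->; rewrite /comb3 !nr_mulDr !nr_mulrzAr !zmul_nat.
rewrite (mulr_c hx hxb) hxb mulr_a hx !nmul_comb3 !comb3D.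
by congr comb3; ring.
Qed.

Variables alpha beta gamma : R -> nat.
Hypothesis mulr_b : forall x : R,
  [/\ (alpha x < p)%N, (beta x < p)%N, (gamma x < p)%N &
      x ⊗ b = comb (alpha x) (beta x) (gamma x)].

Lemma coords_mul x y X1 X2 X3 : x = comb X1 X2 X3 ->
  let ax := (alpha x)%:Z in let bx := (beta x)%:Z in let gx := (gamma x)%:Z in
  let ay := (alpha y)%:Z in let by_ := (beta y)%:Z in let gy := (gamma y)%:Z in
  [/\ (alpha (x ⊗ y) = X1 * ay + ax * by_ %[mod p])%Z,
      (beta (x ⊗ y) = X2 * ay + bx * by_ %[mod p])%Z &
      (gamma (x ⊗ y) = - (X1 * X2 * 'C(alpha y, 2)%:Z) - ax * bx * 'C(beta y, 2)%:Z
         - X2 * ax * ay * by_ + X3 * ay + gx * by_ + X1 * bx * gy - X2 * ax * gy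
         %[mod p])%Z].
Proof.
move=> hx; have [_ _ _ hxb] := mulr_b x.
have [_ _ _ hyb] := mulr_b y; have [_ _ _ hxyb] := mulr_b (x ⊗ y).
have := nr_mulA x y b; rewrite hyb hxyb (mulr_comb3 hx hxb erefl).
by case/eq_comb3_modz.
Qed.

Hypothesis comb3_surj : forall x : R, exists x1 x2 x3 : nat,
  [/\ (x1 < p)%N, (x2 < p)%N, (x3 < p)%N & x = comb x1 x2 x3].

Lemma coords0_zero_symmetric :
  (alpha 0g = 0%N /\ beta 0g = 0%N /\ gamma 0g = 0%N) <-> zero_symmetric R.
Proof.
have zero_comb3 : 0g = comb 0%N 0%N 0%N by rewrite comb30.
have [lt_a0 lt_b0 lt_c0 h0b] := mulr_b 0g.
split=> [[e1 [e2 e3]] y | zs].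
  have [y1 [y2 [y3 [_ _ _ hy]]]] := comb3_surj y.
  rewrite e1 e2 e3 in h0b.
  by rewrite (mulr_comb3 zero_comb3 h0b hy) -comb30; congr comb3; ring.
have := comb3_uniq p_gt0 p_gt0 p_gt0 lt_a0 lt_b0 lt_c0.
by rewrite -h0b zs zero_comb3 => /(_ erefl) [<- <- <-].
Qed.

End NormalForm.


Theorem lemma5 (p : nat) (R : nearring) (a b c : R)
  (alpha beta gamma : R -> nat) :
  prime p -> odd p ->
  (* additive group G_1 *)
  nmul a p = nr_zero R -> nmul b p = nr_zero R -> nmul c p = nr_zero R ->
  nr_add a b = nr_add (nr_add b a) c ->
  nr_add a c = nr_add c a ->
  nr_add b c = nr_add c b ->
  (* G_1 = <a> + <b> + <c>: unique normal form a x1 + b x2 + c x3, 0 <= xi < p *)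
  (forall x : R, exists x1 x2 x3 : nat,
     [/\ (x1 < p)%N, (x2 < p)%N, (x3 < p)%N & x = comb3 a b c x1 x2 x3]) ->
  (forall x1 x2 x3 y1 y2 y3 : nat,
     (x1 < p)%N -> (x2 < p)%N -> (x3 < p)%N ->
     (y1 < p)%N -> (y2 < p)%N -> (y3 < p)%N ->
     comb3 a b c x1 x2 x3 = comb3 a b c y1 y2 y3 ->
     [/\ x1 = y1, x2 = y2 & x3 = y3]) ->
  (* a is the identity of R *)
  (forall x : R, nr_mul a x = x /\ nr_mul x a = x) ->
  (* alpha, beta, gamma : R -> Z_p defined by xb = a alpha(x) + b beta(x) + c gamma(x) *)
  (forall x : R, [/\ (alpha x < p)%N, (beta x < p)%N, (gamma x < p)%N &
       nr_mul x b = comb3 a b c (alpha x) (beta x) (gamma x)]) ->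
  (forall (x y : R) (x1 x2 x3 y1 y2 y3 : nat),
     (x1 < p)%N -> (x2 < p)%N -> (x3 < p)%N ->
     (y1 < p)%N -> (y2 < p)%N -> (y3 < p)%N ->
     x = comb3 a b c x1 x2 x3 -> y = comb3 a b c y1 y2 y3 ->
     let ax : int := alpha x in let bx : int := beta x in
     let gx : int := gamma x in
     let ay : int := alpha y in let by_ : int := beta y in
     let gy : int := gamma y in
     let axy : int := alpha (nr_mul x y) in
     let bxy : int := beta (nr_mul x y) in
     let gxy : int := gamma (nr_mul x y) in
     [/\ nr_mul x y =
           comb3 a b c
             (x1%:Z * y1%:Z + ax * y2%:Z)
             (x2%:Z * y1%:Z + bx * y2%:Z)
             (- (x1%:Z * x2%:Z * ('C(y1, 2))%:Z) - ax * bx * ('C(y2, 2))%:Z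
              - x2%:Z * ax * y1%:Z * y2%:Z + x3%:Z * y1%:Z + gx * y2%:Z
              + x1%:Z * bx * y3%:Z - x2%:Z * ax * y3%:Z),
         (axy = x1%:Z * ay + ax * by_ %[mod p])%Z,
         (bxy = x2%:Z * ay + bx * by_ %[mod p])%Z &
         (gxy = - (x1%:Z * x2%:Z * ('C(alpha y, 2))%:Z)
                - ax * bx * ('C(beta y, 2))%:Z
                - x2%:Z * ax * ay * by_ + x3%:Z * ay + gx * by_
                + x1%:Z * bx * gy - x2%:Z * ax * gy %[mod p])%Z]) /\
  ((alpha (nr_zero R) = 0%N /\ beta (nr_zero R) = 0%N /\ gamma (nr_zero R) = 0%N)
     <-> zero_symmetric R).
Proof.
move=> /prime_gt0 p_gt0 _ ha hb hc hab hac hbc comb3_surj comb3_uniq a_unit mulr_b.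
have mulr_a x : nr_mul x a = x by case: (a_unit x).
split=> [x y x1 x2 x3 y1 y2 y3 _ _ _ _ _ _ hx hy|]; last first.
  exact: (coords0_zero_symmetric p_gt0 ha hb hc hab hac hbc comb3_uniq mulr_a mulr_b comb3_surj).
have [_ _ _ hxb] := mulr_b x.
have [? ? ?] := coords_mul p_gt0 ha hb hc hab hac hbc comb3_uniq mulr_a mulr_b y hx.
by split=> //; exact: (mulr_comb3 p_gt0 ha hb hc hab hac hbc mulr_a hx hxb hy).
Qed.
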